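(* Let $E\subset[0,1]$ be such that $[0,1]\setminus E$ is finite and let $\alpha>0$. Let $\{\Gamma_j\}_{j\in\mathbb N}$ be the consecutive arrival times of a standard Poisson process and $\{\mathcal R_j\}_{j\in\mathbb N}$ i.i.d. copies of a random closed set $\mathcal R$ in $\mathcal F(E)$, independent of $\{\Gamma_j\}$. Assume that almost surely $\mathcal R_J:=\bigcap_{j\in J}\mathcal R_j=\emptyset$ for all finite $J\subset\mathbb N$ with $|J|$ large enough. For finite $J\subset\mathbb N$ let $\mathcal M_J(A)=\sum_{j\in J}\Gamma_j^{-1/\alpha}$ if $\mathcal R_J\cap A\ne\emptyset$ and $\mathcal M_J(A)=-\infty$ otherwise ($A\subset E$), with $\mathcal M_\emptyset\equiv-\infty$, and let $\mathcal M^{\rm Ca}_{\alpha,\mathcal R}=\sup_{J\subset\mathbb N,|J|<\infty}\mathcal M_J$. For $t\in E$ let $\mathcal J_t=\{\ell\in\mathbb N: t\in\mathcal R_\ell\}$ and $\xi_\alpha(t)=\sum_{j\in\mathcal J_t}\Gamma_j^{-1/\alpha}$ if $\mathcal J_t\ne\emptyset$, $\xi_\alpha(t)=-\infty$ otherwise. Then almost surely $\mathcal M^{\rm Ca}_{\alpha,\mathcal R}(A)=\sup_{t\in A}\xi_\alpha(t)$ for the sets $A\subset E$, i.e. $\mathcal M^{\rm Ca}_{\alpha,\mathcal R}$ equals the sup-integral of $\xi_\alpha$ as sup-measures on $E$.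
   Context: $\mathcal F(E)$ is the space of closed subsets of $E$ with the Fell topology. A sup-measure on $E$ is a map $m$ from subsets of $E$ to $[-\infty,\infty]$ with $m(\bigcup_\lambda A_\lambda)=\sup_\lambda m(A_\lambda)$ and $m(\emptyset)=-\infty$. The supremum over finite $J$ is understood pointwise, as the increasing limit of maxima over $J\subset\{1,\dots,\ell\}$ as $\ell\to\infty$. *)

From HB Require Import structures.
From mathcomp Require Import all_boot all_order all_algebra finmap.
From mathcomp Require Import all_classical all_reals all_analysis.
Set Implicit Arguments. Unset Strict Implicit. Unset Printing Implicit Defensive.
Import Order.TTheory GRing.Theory Num.Theory.
Import numFieldNormedType.Exports.
Local Open Scope classical_set_scope.
Local Open Scope ring_scope.
Local Open Scope ereal_scope.

Section Defs.
Context {R : realType}.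

Definition closed_in (E F : set R) : Prop :=
  F `<=` E /\ exists C : set R, closed C /\ F = E `&` C.

(* Hitting events {F : F ∩ K <> ∅}, K compact subset of E.  They generate the
   Borel sigma-algebra of the Fell topology on F(E) (E locally compact,
   second countable, Hausdorff). *)
Definition fell_hitting (E : set R) : set (set (set R)) :=
  [set [set F : set R | F `&` K !=set0] | K in [set K : set R | compact K /\ K `<=` E]].

Definition fell_sigma (E : set R) : set (set (set R)) := <<s fell_hitting E >>.

Definition random_closed_set d (T : measurableType d) (E : set R)
    (X : T -> set R) : Prop :=
  (forall w, closed_in E (X w)) /\
  (forall B, fell_sigma E B -> measurable (X @^-1` B)).

Definition sigma_real d (T : measurableType d) (X : T -> R) : set (set T) :=
  [set X @^-1` B | B in [set B : set R | measurable B]].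
Definition sigma_rcs d (T : measurableType d) (E : set R) (X : T -> set R)
    : set (set T) :=
  [set X @^-1` B | B in fell_sigma E].

Definition mutually_independent d (T : measurableType d) (I : choiceType)
    (P : probability T R) (F : I -> set (set T)) : Prop :=
  forall (J : {fset I}) (A : I -> set T),
    (forall i, i \in J -> F i (A i)) ->
    P (\bigcap_(i in [set` J]) A i) = \prod_(i <- J) P (A i).

Definition exponential1 d (T : measurableType d) (P : probability T R)
    (X : T -> R) : Prop :=
  measurable_fun setT X /\
  forall x : R, (0 <= x)%R -> P [set w | (X w <= x)%R] = (1 - expR (- x))%:E.

(* arrival times of a standard Poisson process built from the
   i.i.d. Exp(1) inter-arrival times X_0, X_1, ... (Gamma_j, j = 0,1,...) *)
Definition arrival (X : nat -> R) (j : nat) : R := (\sum_(i < j.+1) X i)%R.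

Definition RJ (Rs : nat -> set R) (J : {fset nat}) : set R :=
  \bigcap_(j in [set` J]) Rs j.

Definition MJ (alpha : R) (G : nat -> R) (Rs : nat -> set R) (J : {fset nat})
    (A : set R) : \bar R :=
  if J == fset0 then -oo
  else if `[< RJ Rs J `&` A !=set0 >]
       then (\sum_(j <- J) powR (G j) (- alpha^-1))%R%:E
       else -oo.

Definition MCa (alpha : R) (G : nat -> R) (Rs : nat -> set R) (A : set R)
    : \bar R :=
  ereal_sup [set MJ alpha G Rs J A | J in [set: {fset nat}]].

Definition xi (alpha : R) (G : nat -> R) (Rs : nat -> set R) (t : R) : \bar R :=
  if `[< exists l, Rs l t >]
  then \esum_(j in [set l | Rs l t]) (powR (G j) (- alpha^-1))%:E
  else -oo.

End Defs.

From HB Require Import structures.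
From mathcomp Require Import all_boot all_order all_algebra finmap.
From mathcomp Require Import all_classical all_reals all_analysis.
Import Order.TTheory GRing.Theory Num.Theory.
Local Open Scope classical_set_scope.
Local Open Scope ring_scope.
Local Open Scope ereal_scope.

(* The identity holds pathwise, for every realisation in which R_J is empty
   once |J| >= N.  Then each
   J_t = {l | t \in R_l} is finite (|J_t| < N), so xi(t) = M_{J_t}(A) for
   t \in A, giving sup_A xi <= M^Ca(A).  Conversely, if M_J(A) > -oo pick
   t \in R_J \cap A; then J \subset J_t and the weights are nonnegative, so
   M_J(A) <= xi(t). *)

Lemma ler_sum_fsubset {R : numDomainType} {I : choiceType} (J K : {fset I})
    (F : I -> R) :
  (J `<=` K)%fset -> (forall i, i \in K -> 0 <= F i)%R ->
  (\sum_(i <- J) F i <= \sum_(i <- K) F i)%R.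
Proof.
move=> JK F0; rewrite (big_fsetID _ (mem J) K) /=.
have -> : [fset x | x in K & x \in J]%fset = J.
  by apply/fsetP => i; rewrite !inE andb_idl // => /(fsubsetP JK).
by rewrite lerDl big_seq sumr_ge0 // => i; rewrite !inE => /andP[/F0].
Qed.

Section Pathwise.
Context {R : realType}.
Variables (alpha : R) (G : nat -> R) (Rs : nat -> set R).

Definition indices_at (t : R) : set nat := [set l | Rs l t].

Lemma finite_indices_at (N : nat) :
  (forall J : {fset nat}, (N <= #|` J|)%N -> RJ Rs J = set0) ->
  forall t, finite_set (indices_at t).
Proof.
move=> RJ0 t; apply: contrapT => /(infinite_set_fset N) [J Jt NJ].
by have /seteqP [/(_ t) + _] := RJ0 J NJ; apply => j /Jt.
Qed.

Lemma xi_fsetE (t : R) : finite_set (indices_at t) -> indices_at t !=set0 ->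
  xi alpha G Rs t =
  (\sum_(j <- fset_set (indices_at t)) powR (G j) (- alpha^-1))%R%:E.
Proof.
move=> fin Rt; rewrite /xi; case: asboolP => // _.
rewrite esum_fset //; last by move=> j _; rewrite lee_fin powR_ge0.
by rewrite fsbig_finite // sumEFin.
Qed.

Lemma xi_MJ_indices {A : set R} {t : R} : A t -> finite_set (indices_at t) ->
  xi alpha G Rs t = MJ alpha G Rs (fset_set (indices_at t)) A.
Proof.
move=> At fin; have [Rt|noRt] := pselect (indices_at t !=set0); last first.
  rewrite /xi /MJ; case: asboolP => // _.
  suff -> : indices_at t = set0 by rewrite fset_set0 eqxx.
  by apply/seteqP; split => // l Rlt; apply: noRt; exists l.
have [l Rlt] := Rt.
rewrite xi_fsetE // /MJ ifF; last first.
  by apply/negbTE/fset0Pn; exists l; rewrite in_fset_set // inE.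
case: asboolP => // -[]; exists t; split => // j /=.
by rewrite in_fset_set // inE.
Qed.

Lemma MJ_le_xi (J : {fset nat}) (A : set R) :
  (forall t, finite_set (indices_at t)) ->
  MJ alpha G Rs J A <= ereal_sup [set xi alpha G Rs t | t in A].
Proof.
move=> fin; rewrite /MJ; case: ifP => [_|/negbT J0]; first exact: leNye.
case: asboolP => [[t [RJt At]]|_]; last exact: leNye.
apply: le_trans (ereal_sup_ubound _); last by exists t.
have Rt : indices_at t !=set0 by case/fset0Pn: J0 => j /RJt; exists j.
rewrite xi_fsetE // lee_fin ler_sum_fsubset // => [|j _]; last exact: powR_ge0.
by apply/fsubsetP => j /RJt Rjt; rewrite in_fset_set // inE.
Qed.

Lemma MCa_sup_xi (N : nat) (A : set R) :
  (forall J : {fset nat}, (N <= #|` J|)%N -> RJ Rs J = set0) ->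
  MCa alpha G Rs A = ereal_sup [set xi alpha G Rs t | t in A].
Proof.
move=> /finite_indices_at fin; apply: le_anti; apply/andP; split.
  by apply: ge_ereal_sup => _ [J _ <-]; exact: MJ_le_xi.
apply: ge_ereal_sup => _ [t At <-]; rewrite (xi_MJ_indices At (fin t)).
by apply: ereal_sup_ubound; exists (fset_set (indices_at t)).
Qed.

End Pathwise.

Theorem proposition2p3 (R : realType) (E : set R) (alpha : R)
  (d : measure_display) (T : measurableType d) (P : probability T R)
  (X : nat -> T -> R) (Rs : nat -> T -> set R) :
  E `<=` `[0%R, 1%R] ->
  finite_set (`[0%R, 1%R] `\` E) ->
  (0 < alpha)%R ->
  (* inter-arrival times: each Exp(1) *)
  (forall i, exponential1 P (X i)) ->
  (* each R_j is a random closed set in F(E) *)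
  (forall j, random_closed_set E (Rs j)) ->
  (* R_j identically distributed *)
  (forall j B, fell_sigma E B -> P (Rs j @^-1` B) = P (Rs 0%N @^-1` B)) ->
  (* X_0, X_1, ..., R_0, R_1, ... mutually independent *)
  mutually_independent P
    (fun k : nat + nat => match k with
                          | inl i => sigma_real (X i)
                          | inr j => sigma_rcs E (Rs j) end) ->
  (* a.s. R_J is empty for all finite J with |J| large enough *)
  {ae P, forall w, exists N : nat, forall J : {fset nat},
      (N <= #|` J|)%N -> RJ (fun j => Rs j w) J = set0} ->
  {ae P, forall w, forall A : set R, A `<=` E ->
      MCa alpha (fun j => arrival (fun i => X i w) j) (fun j => Rs j w) A =
      ereal_sup [set xi alpha (fun j => arrival (fun i => X i w) j)
                      (fun j => Rs j w) t | t in A]}.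
Proof.
move=> _ _ _ _ _ _ _; apply: filterS => w [N RJ0] A _.
exact: (MCa_sup_xi _ _ _ _ A RJ0).
Qed.
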